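(* Let $\rho,k\ge 1$ and let $\mathcal{F}$ be a finite family of $\rho$-fat objects in the plane with size-ratio at most $k$, and let $G$ be its intersection graph. Then $\chi_{CF}^{pn}(G)=O(k^2\rho^2)$ and $\chi_{CF}^{cn}(G)=O(\rho^2\log k)$ (for $k\ge2$ in the latter), where the implied constants are absolute.
   Context: A simple Jordan region $C$ in the plane is $\rho$-fat if there exist $x\in C$ and discs $A,B$ centered at $x$ with radii $r_A,r_B$ such that $A\subseteq C\subseteq B$ and $r_B/r_A\le\rho$. The size of a $\rho$-fat object $C$ is the maximum of $r_A$ over all such pairs $A,B$. The size-ratio of $\mathcal{F}$ is $\max_{C_1,C_2\in\mathcal{F}}\mathrm{size}(C_1)/\mathrm{size}(C_2)$. The intersection graph of $\mathcal{F}$ has vertex set $\mathcal{F}$, with distinct $C_1,C_2$ adjacent iff $C_1\cap C_2\neq\emptyset$. A coloring of $V(G)$ is a pointed (resp. closed) CF-coloring if for every $v$ with $N_G(v)\neq\emptyset$ (resp. for every $v$), the set $N_G(v)=\{u:\{u,v\}\in E(G)\}$ (resp. $N_G[v]=N_G(v)\cup\{v\}$) contains a vertex whose color differs from the colors of all other vertices of that set; $\chi_{CF}^{pn}(G)$ and $\chi_{CF}^{cn}(G)$ denote the minimum numbers of colors in such colorings. *)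

From Stdlib Require Import Reals Lra.
Open Scope R_scope.

Definition pt := (R * R)%type.
Definition dist2 (p q : pt) : R :=
  sqrt ((fst p - fst q)^2 + (snd p - snd q)^2).

Definition disc (x : pt) (r : R) : pt -> Prop := fun p => dist2 x p <= r.

Definition subset (A B : pt -> Prop) : Prop := forall p, A p -> B p.

Definition cont_path (f : R -> pt) : Prop :=
  forall t eps, 0 < eps -> exists delta, 0 < delta /\
    forall s, Rabs (s - t) < delta -> dist2 (f s) (f t) < eps.

Definition jordan_curve (g : R -> pt) : Prop :=
  cont_path g /\ (forall t, g (t + 1) = g t) /\
  (forall s t, 0 <= s < 1 -> 0 <= t < 1 -> g s = g t -> s = t).

Definition on_curve (g : R -> pt) (p : pt) : Prop :=
  exists t, 0 <= t <= 1 /\ g t = p.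

(* q can be reached from p by a path in the complement of the curve
   (the components of this open set are its path components). *)
Definition joined_off (g : R -> pt) (p q : pt) : Prop :=
  exists f : R -> pt, cont_path f /\ f 0 = p /\ f 1 = q /\
    forall t, 0 <= t <= 1 -> ~ on_curve g (f t).

(* p lies in the bounded component of the complement of the curve. *)
Definition in_interior (g : R -> pt) (p : pt) : Prop :=
  ~ on_curve g p /\ exists M, forall q, joined_off g p q -> dist2 p q <= M.

Definition jordan_region (C : pt -> Prop) : Prop :=
  exists g, jordan_curve g /\
    forall p, C p <-> (on_curve g p \/ in_interior g p).

Definition fat_radius (rho : R) (C : pt -> Prop) (rA : R) : Prop :=
  exists x rB, C x /\ 0 < rA /\ subset (disc x rA) C /\
    subset C (disc x rB) /\ rB / rA <= rho.

Definition fat (rho : R) (C : pt -> Prop) : Prop :=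
  jordan_region C /\ exists rA, fat_radius rho C rA.

(* size(C) = max of the admissible rA; stated as the least upper bound
   (which is attained, hence equals the maximum). *)
Definition is_size (rho : R) (C : pt -> Prop) (s : R) : Prop :=
  is_lub (fat_radius rho C) s.

(* Family F indexed by 0..n-1, members pairwise distinct.
   Intersection graph: u,v adjacent iff u <> v and F u, F v meet. *)
Definition adj (F : nat -> pt -> Prop) (u v : nat) : Prop :=
  u <> v /\ exists p, F u p /\ F v p.

Definition pointed_cf (n : nat) (F : nat -> pt -> Prop) (c : nat -> nat) : Prop :=
  forall v, (v < n)%nat -> (exists u, (u < n)%nat /\ adj F v u) ->
    exists u, (u < n)%nat /\ adj F v u /\
      forall w, (w < n)%nat -> adj F v w -> w <> u -> c w <> c u.

Definition closed_cf (n : nat) (F : nat -> pt -> Prop) (c : nat -> nat) : Prop :=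
  forall v, (v < n)%nat ->
    exists u, (u < n)%nat /\ (u = v \/ adj F v u) /\
      forall w, (w < n)%nat -> (w = v \/ adj F v w) -> w <> u -> c w <> c u.

Definition colours_below (n : nat) (c : nat -> nat) (m : nat) : Prop :=
  forall i, (i < n)%nat -> (c i < m)%nat.

Definition chi_pn_le (n : nat) (F : nat -> pt -> Prop) (X : R) : Prop :=
  exists m c, INR m <= X /\ colours_below n c m /\ pointed_cf n F c.
Definition chi_cn_le (n : nat) (F : nat -> pt -> Prop) (X : R) : Prop :=
  exists m c, INR m <= X /\ colours_below n c m /\ closed_cf n F c.

(* Normalise the family: member [i] contains the disc of radius [r i] about [x i] and lies in
   the concentric disc of radius [rho * r i], where [m / 2 < r i <= k * m].  Disjoint members
   have centres at distance about their inner radius, so a grid argument bounds the number of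
   pairwise disjoint members of comparable size near a point.

   Pointed colouring: a maximal independent set [I], together with one neighbour of each
   non-isolated vertex of [I], dominates every non-isolated vertex.  Two of these
   representatives with a common neighbour lie within [O(rho k m)] of each other, so colouring
   them properly in the "common neighbour" graph, with [O((rho k)^2)] colours, and all other
   vertices with one extra colour, is conflict-free.

   Closed colouring: split the radii into [log2 k] dyadic classes and choose [I] greedily by
   decreasing radius.  A vertex outside [I] is served by its [I]-neighbour of largest class;
   this works once [I]-vertices of the same class within [O(rho)] class radii of each other get
   distinct colours, which costs [O(rho^2)] colours per class. *)

From Pilot Require Import Defs.
From Stdlib Require Import Reals Lra Lia Psatz List ZArith.
From Stdlib Require Import Classical ClassicalEpsilon ChoiceFacts.
(* [Reals] exports its own [disc]; re-import to make [Defs.disc] visible again. *)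
Import Defs.
Open Scope R_scope.

Lemma guarded_choice {A B : Type} (b0 : B) (D : A -> Prop) (P : A -> B -> Prop) :
  (forall a, D a -> exists b, P a b) -> exists f : A -> B, forall a, D a -> P a (f a).
Proof.
  intros H.
  apply (constructive_indefinite_descr_fun_choice
           (fun T => @constructive_indefinite_description T) (fun a b => D a -> P a b)).
  intro a. destruct (classic (D a)) as [Ha | Ha].
  - destruct (H a Ha) as [b Hb]. exists b. auto.
  - exists b0. tauto.
Qed.

Definition sup_dist (p q : pt) : R :=
  Rmax (Rabs (fst p - fst q)) (Rabs (snd p - snd q)).

Lemma Rabs_le_sqrt_sum_sq a b : Rabs a <= sqrt (a ^ 2 + b ^ 2).
Proof.
  rewrite <- sqrt_Rsqr_abs. apply sqrt_le_1_alt. unfold Rsqr. simpl. nra.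
Qed.

Lemma dist2_sym p q : dist2 p q = dist2 q p.
Proof. unfold dist2. f_equal. ring. Qed.

Lemma dist2_diag p : dist2 p p = 0.
Proof.
  unfold dist2. replace ((fst p - fst p) ^ 2 + (snd p - snd p) ^ 2) with 0 by ring.
  apply sqrt_0.
Qed.

Lemma sup_dist_sym p q : sup_dist p q = sup_dist q p.
Proof. unfold sup_dist. rewrite (Rabs_minus_sym (fst p)), (Rabs_minus_sym (snd p)). reflexivity. Qed.

Lemma sup_dist_diag p : sup_dist p p = 0.
Proof. unfold sup_dist. rewrite !Rminus_diag, Rabs_R0. apply Rmax_left. lra. Qed.

Lemma sup_dist_triangle p q s : sup_dist p s <= sup_dist p q + sup_dist q s.
Proof.
  unfold sup_dist.
  pose proof (Rmax_l (Rabs (fst p - fst q)) (Rabs (snd p - snd q))).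
  pose proof (Rmax_r (Rabs (fst p - fst q)) (Rabs (snd p - snd q))).
  pose proof (Rmax_l (Rabs (fst q - fst s)) (Rabs (snd q - snd s))).
  pose proof (Rmax_r (Rabs (fst q - fst s)) (Rabs (snd q - snd s))).
  pose proof (Rabs_triang (fst p - fst q) (fst q - fst s)).
  pose proof (Rabs_triang (snd p - snd q) (snd q - snd s)).
  replace (fst p - fst q + (fst q - fst s)) with (fst p - fst s) in * by ring.
  replace (snd p - snd q + (snd q - snd s)) with (snd p - snd s) in * by ring.
  apply Rmax_lub; lra.
Qed.

Lemma sup_dist_le_dist2 p q : sup_dist p q <= dist2 p q.
Proof.
  unfold sup_dist, dist2. apply Rmax_lub; [apply Rabs_le_sqrt_sum_sq |].
  rewrite Rplus_comm. apply Rabs_le_sqrt_sum_sq.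
Qed.

Lemma dist2_le_sup_dist p q : dist2 p q <= 2 * sup_dist p q.
Proof.
  unfold dist2, sup_dist.
  set (a := fst p - fst q). set (b := snd p - snd q).
  pose proof (Rmax_l (Rabs a) (Rabs b)). pose proof (Rmax_r (Rabs a) (Rabs b)).
  pose proof (Rabs_pos a). pose proof (Rabs_pos b).
  rewrite <- (sqrt_pow2 (2 * Rmax (Rabs a) (Rabs b))) by lra. apply sqrt_le_1_alt.
  rewrite <- (pow2_abs a), <- (pow2_abs b). nra.
Qed.

Lemma inner_radius_le_outer (C : pt -> Prop) x rB y r :
  0 < r -> subset (disc y r) C -> subset C (disc x rB) -> r <= rB.
Proof.
  intros Hr Hin Hout.
  assert (Hedge : forall h, Rabs h = r -> Rabs (fst x - (fst y + h)) <= rB).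
  { intros h Hh.
    assert (Hq : disc x rB (fst y + h, snd y)).
    { apply Hout, Hin. unfold disc, dist2; cbn [fst snd].
      replace ((fst y - (fst y + h)) ^ 2 + (snd y - snd y) ^ 2) with (Rsqr (- h))
        by (unfold Rsqr; ring).
      rewrite sqrt_Rsqr_abs, Rabs_Ropp. lra. }
    pose proof (sup_dist_le_dist2 x (fst y + h, snd y)) as Hs.
    unfold sup_dist in Hs. simpl in Hs.
    pose proof (Rmax_l (Rabs (fst x - (fst y + h))) (Rabs (snd x - snd y))).
    unfold disc in Hq. lra. }
  assert (Habs : Rabs r = r) by (apply Rabs_right; lra).
  pose proof (Hedge r Habs) as H1.
  pose proof (Hedge (- r) ltac:(rewrite Rabs_Ropp; exact Habs)) as H2.
  pose proof (Rle_abs (fst x - (fst y + - r))).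
  pose proof (Rle_abs (- (fst x - (fst y + r)))). rewrite Rabs_Ropp in *. lra.
Qed.

Lemma fat_size_exists rho C : fat rho C -> exists s, is_size rho C s /\ 0 < s.
Proof.
  intros [_ [rA HA]].
  pose proof HA as [x [rB [_ [HrA [_ [Hout _]]]]]].
  destruct (completeness (fat_radius rho C)) as [s Hs].
  - exists rB. intros r [y [rB' [_ [Hr [Hin _]]]]].
    exact (inner_radius_le_outer C x rB y r Hr Hin Hout).
  - exists rA. exact HA.
  - exists s. split; [exact Hs |].
    destruct Hs as [Hub _]. specialize (Hub rA HA). lra.
Qed.

Lemma size_nearly_attained rho C s : is_size rho C s -> 0 < s ->
  exists x r, s / 2 < r <= s /\ subset (disc x r) C /\ subset C (disc x (rho * r)).
Proof.
  intros [Hub Hlub] Hs.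
  destruct (classic (exists r, fat_radius rho C r /\ s / 2 < r)) as [[r [Hr Hlt]] | Hnone].
  - pose proof Hr as [x [rB [_ [Hr0 [Hin [Hout Hratio]]]]]].
    exists x, r. split; [split; [lra | exact (Hub r Hr)] |]. split; [exact Hin |].
    intros p Hp. apply Hout in Hp. unfold disc in *.
    assert (rB <= rho * r).
    { replace rB with (rB / r * r) by (field; lra). apply Rmult_le_compat_r; lra. }
    lra.
  - assert (s <= s / 2).
    { apply Hlub. intros r Hr. apply Rnot_lt_le. intro Hlt. apply Hnone. exists r. auto. }
    lra.
Qed.

Lemma In_argmax (w : nat -> R) (l : list nat) : l <> nil ->
  exists v, In v l /\ forall u, In u l -> w u <= w v.
Proof.
  induction l as [|a l IH]; intro Hl; [congruence |].
  destruct l as [|b l'].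
  - exists a. split; [now left |]. intros u [<- | []]. lra.
  - destruct IH as [v [Hv Hmax]]; [discriminate |].
    destruct (Rle_dec (w a) (w v)).
    + exists v. split; [now right |]. intros u [<- | Hu]; auto.
    + exists a. split; [now left |]. intros u [<- | Hu]; [lra |].
      specialize (Hmax u Hu). lra.
Qed.

Definition normalised_family (rho k m : R) (n : nat) (F : nat -> pt -> Prop)
  (x : nat -> pt) (r : nat -> R) : Prop :=
  forall i, (i < n)%nat -> m / 2 < r i <= k * m /\
    subset (disc (x i) (r i)) (F i) /\ subset (F i) (disc (x i) (rho * r i)).

(* [m] is the least size in the family, so the size-ratio bound caps every radius by [k * m]. *)
Lemma fat_family_normalisation rho k n F :
  (forall i, (i < n)%nat -> fat rho (F i)) ->
  (forall i j s1 s2, (i < n)%nat -> (j < n)%nat ->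
     is_size rho (F i) s1 -> is_size rho (F j) s2 -> s1 <= k * s2) ->
  exists x r m, 0 < m /\ normalised_family rho k m n F x r.
Proof.
  intros Hfat Hsize.
  destruct (guarded_choice 0 (fun i => (i < n)%nat)
              (fun i s => is_size rho (F i) s /\ 0 < s)) as [s Hs].
  { intros i Hi. exact (fat_size_exists rho (F i) (Hfat i Hi)). }
  destruct (guarded_choice ((0, 0) : pt, 0) (fun i => (i < n)%nat)
              (fun i (c : pt * R) => s i / 2 < snd c <= s i /\
                 subset (disc (fst c) (snd c)) (F i) /\
                 subset (F i) (disc (fst c) (rho * snd c)))) as [c Hc].
  { intros i Hi. destruct (Hs i Hi) as [Hsz Hpos].
    destruct (size_nearly_attained rho (F i) (s i) Hsz Hpos) as [y [r Hyr]].
    exists (y, r). exact Hyr. }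
  exists (fun i => fst (c i)), (fun i => snd (c i)).
  destruct n as [| n].
  - exists 1. split; [lra |]. intros i Hi. lia.
  - destruct (In_argmax (fun i => - s i) (seq 0 (S n))) as [i0 [Hi0 Hmin]];
      [discriminate |].
    apply in_seq in Hi0.
    exists (s i0). split; [apply Hs; lia |].
    intros i Hi. destruct (Hc i Hi) as [[Hlo Hhi] Hdiscs].
    assert (s i0 <= s i).
    { assert (Hin : In i (seq 0 (S n))) by (apply in_seq; lia).
      specialize (Hmin i Hin). lra. }
    assert (s i <= k * s i0).
    { apply (Hsize i i0); [lia | lia | apply Hs; lia | apply Hs; lia]. }
    split; [split; lra | exact Hdiscs].
Qed.

Definition cell (h t : R) : Z := (up (t / h) - 1)%Z.

Lemma cell_spec h t : IZR (cell h t) <= t / h < IZR (cell h t) + 1.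
Proof. unfold cell. rewrite minus_IZR. destruct (archimed (t / h)). lra. Qed.

Lemma Rdiv_le_mono_pos a b h : 0 < h -> a <= b -> a / h <= b / h.
Proof. intros Hh Hab. apply Rmult_le_compat_r; [left; apply Rinv_0_lt_compat |]; lra. Qed.

Lemma cell_eq_close h t t' : 0 < h -> cell h t = cell h t' -> Rabs (t - t') < h.
Proof.
  intros Hh E. pose proof (cell_spec h t). pose proof (cell_spec h t'). rewrite E in *.
  assert (Hq : Rabs (t / h - t' / h) < 1) by (apply Rabs_def1; lra).
  replace (t - t') with ((t / h - t' / h) * h) by (field; lra).
  rewrite Rabs_mult, (Rabs_right h) by lra.
  pose proof (Rabs_pos (t / h - t' / h)). nra.
Qed.

Lemma cell_near h t c D : 0 < h -> Rabs (t - c) <= D ->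
  (Z.abs (cell h t - cell h c) <= up (D / h))%Z.
Proof.
  intros Hh Htc. pose proof (cell_spec h t). pose proof (cell_spec h c).
  destruct (archimed (D / h)) as [Hup _].
  pose proof (Rle_abs (t - c)). pose proof (Rle_abs (- (t - c))). rewrite Rabs_Ropp in *.
  assert (t / h - c / h <= D / h).
  { replace (t / h - c / h) with ((t - c) / h) by (field; lra). apply Rdiv_le_mono_pos; lra. }
  assert (c / h - t / h <= D / h).
  { replace (c / h - t / h) with (- (t - c) / h) by (field; lra). apply Rdiv_le_mono_pos; lra. }
  assert (Hlt1 : IZR (cell h t - cell h c) < IZR (up (D / h) + 1))
    by (rewrite minus_IZR, plus_IZR; lra).
  assert (Hlt2 : IZR (cell h c - cell h t) < IZR (up (D / h) + 1))
    by (rewrite minus_IZR, plus_IZR; lra).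
  apply lt_IZR in Hlt1. apply lt_IZR in Hlt2. lia.
Qed.

Definition grid_radius (x : R) : nat := Z.to_nat (up x).

Definition grid_count (x : R) : nat :=
  ((2 * grid_radius x + 1) * (2 * grid_radius x + 1) * 2)%nat.

Lemma grid_count_bound x : 0 <= x -> INR (grid_count x) <= 2 * (2 * x + 3) ^ 2.
Proof.
  intro Hx. destruct (archimed x) as [H1 H2].
  assert (Hr : INR (grid_radius x) = IZR (up x)).
  { unfold grid_radius. rewrite INR_IZR_INZ, Z2Nat.id; [reflexivity |].
    apply le_IZR. lra. }
  unfold grid_count. rewrite !mult_INR, !plus_INR, !mult_INR, Hr. simpl. nra.
Qed.

Definition Zinterval (c : Z) (B : nat) : list Z :=
  map (fun i => (c - Z.of_nat B + Z.of_nat i)%Z) (seq 0 (2 * B + 1)).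

Lemma In_Zinterval c B z : (Z.abs (z - c) <= Z.of_nat B)%Z -> In z (Zinterval c B).
Proof.
  intro H. apply in_map_iff. exists (Z.to_nat (z - c + Z.of_nat B)).
  split; [rewrite Z2Nat.id; lia | apply in_seq; lia].
Qed.

(* Separation is only required within each class of [cls]; the grid is doubled to match. *)
Lemma packing_bound (l : list nat) (p : nat -> pt) (cls : nat -> bool) (h D : R) (c : pt) :
  0 < h -> NoDup l ->
  (forall u, In u l -> sup_dist (p u) c <= D) ->
  (forall u w, In u l -> In w l -> cls u = cls w -> sup_dist (p u) (p w) < h -> u = w) ->
  (length l <= grid_count (D / h))%nat.
Proof.
  intros Hh Hl Hnear Hsep.
  set (key := fun u => (cell h (fst (p u)), cell h (snd (p u)), cls u)).
  set (B := grid_radius (D / h)).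
  set (grid := list_prod (list_prod (Zinterval (cell h (fst c)) B)
                                    (Zinterval (cell h (snd c)) B)) (true :: false :: nil)).
  assert (Hgrid : length grid = grid_count (D / h)).
  { unfold grid. rewrite !length_prod. unfold Zinterval. rewrite !length_map, length_seq.
    reflexivity. }
  rewrite <- Hgrid, <- (length_map key l). apply NoDup_incl_length.
  - apply (NoDup_map_NoDup_ForallPairs key); [| exact Hl].
    intros u w Hu Hw E. injection E as E1 E2 E3. apply Hsep; auto.
    apply Rmax_lub_lt; apply cell_eq_close; auto.
  - intros k Hk. apply in_map_iff in Hk. destruct Hk as [u [<- Hu]].
    specialize (Hnear u Hu). unfold sup_dist in Hnear.
    pose proof (Rmax_l (Rabs (fst (p u) - fst c)) (Rabs (snd (p u) - snd c))).
    pose proof (Rmax_r (Rabs (fst (p u) - fst c)) (Rabs (snd (p u) - snd c))).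
    assert (HB : Z.of_nat B = up (D / h)).
    { apply Z2Nat.id, le_IZR. destruct (archimed (D / h)).
      pose proof (Rabs_pos (fst (p u) - fst c)).
      assert (0 <= D / h)
        by (unfold Rdiv; apply Rmult_le_pos; [lra | left; apply Rinv_0_lt_compat; lra]).
      lra. }
    apply in_prod_iff. split; [apply in_prod_iff; split | destruct (cls u); simpl; auto];
      apply In_Zinterval; rewrite HB; apply cell_near; lra.
Qed.

Lemma colour_witnesses (P : nat -> Prop) (c : nat -> nat) N :
  (forall col, (col < N)%nat -> exists u, P u /\ c u = col) ->
  exists l, NoDup l /\ length l = N /\ forall u, In u l -> P u /\ (c u < N)%nat.
Proof.
  induction N as [| N IH]; intro Hcol.
  - exists nil. split; [constructor |]. split; [reflexivity | intros u []].
  - destruct IH as [l [Hl [Hlen Hin]]]; [intros col Hc; apply Hcol; lia |].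
    destruct (Hcol N ltac:(lia)) as [u [Pu Cu]].
    exists (u :: l). split; [| split].
    + constructor; [| exact Hl]. intro Hu. apply Hin in Hu. lia.
    + simpl. lia.
    + intros w [<- | Hw]; [split; [exact Pu | lia] |].
      destruct (Hin w Hw). split; [assumption | lia].
Qed.

Lemma greedy_colouring (E : nat -> nat -> Prop) (D n : nat) :
  (forall u w, E u w -> E w u) -> (forall u, ~ E u u) ->
  (forall u, (u < n)%nat -> forall l, NoDup l ->
     (forall w, In w l -> (w < n)%nat /\ E u w) -> (length l <= D)%nat) ->
  exists c : nat -> nat, (forall u, (c u <= D)%nat) /\
    forall u w, (u < n)%nat -> (w < n)%nat -> E u w -> c u <> c w.
Proof.
  intros Hsym Hirr. induction n as [| n IH]; intro Hdeg.
  - exists (fun _ => 0%nat). split; intros; lia.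
  - destruct IH as [c [Hc Hproper]].
    { intros u Hu l Hl Hin. apply (Hdeg u); [lia | exact Hl |].
      intros w Hw. destruct (Hin w Hw). split; [lia | assumption]. }
    assert (Hfree : exists col, (col <= D)%nat /\
                      forall u, (u < n)%nat -> E n u -> c u <> col).
    { apply NNPP. intro Hnone.
      destruct (colour_witnesses (fun u => (u < n)%nat /\ E n u) c (S D))
        as [l [Hl [Hlen Hin]]].
      { intros col Hcol. apply NNPP. intro Hunused. apply Hnone.
        exists col. split; [lia |]. intros u Hu Hnu E'. apply Hunused. eauto. }
      assert (length l <= D)%nat.
      { apply (Hdeg n); [lia | exact Hl |].
        intros w Hw. destruct (Hin w Hw) as [[? ?] _]. split; [lia | assumption]. }
      lia. }
    destruct Hfree as [col [Hcol Hfree]].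
    exists (fun u => if Nat.eqb u n then col else c u). split.
    + intro u. destruct (Nat.eqb u n); auto.
    + intros u w Hu Hw Huw.
      destruct (Nat.eqb_spec u n), (Nat.eqb_spec w n); subst.
      * exfalso. exact (Hirr n Huw).
      * intro E'. apply (Hfree w); [lia | exact Huw | congruence].
      * apply (Hfree u); [lia | exact (Hsym _ _ Huw)].
      * apply Hproper; [lia | lia | exact Huw].
Qed.

Lemma filter_length_lt {A} (f : A -> bool) l a :
  In a l -> f a = false -> (length (filter f l) < length l)%nat.
Proof.
  induction l as [| b l IH]; simpl; intros Hin Hf; [contradiction |].
  destruct Hin as [-> | Hin].
  - rewrite Hf. pose proof (filter_length_le f l). lia.
  - specialize (IH Hin Hf). destruct (f b); simpl; lia.
Qed.

(* Greedily take the heaviest remaining vertex and discard its neighbours. *)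
Lemma greedy_independent_set (E : nat -> nat -> Prop) (w : nat -> R) :
  (forall u v, E u v -> E v u) -> (forall u, ~ E u u) ->
  forall L : list nat, exists I : nat -> Prop,
    (forall u, I u -> In u L) /\ (forall u v, I u -> I v -> ~ E u v) /\
    (forall v, In v L -> ~ I v -> exists u, I u /\ E v u /\ w v <= w u).
Proof.
  intros Hsym Hirr L. remember (length L) as N eqn:HN. revert L HN.
  induction N as [N IH] using (well_founded_induction lt_wf). intros L HN.
  destruct L as [| a L0].
  - exists (fun _ => False). split; [| split]; intros; tauto.
  - destruct (In_argmax w (a :: L0)) as [v0 [Hv0 Hmax]]; [discriminate |].
    set (keep := fun u => if excluded_middle_informative (u = v0 \/ E v0 u)
                          then false else true).
    assert (Hkeep : forall u, keep u = true <-> ~ (u = v0 \/ E v0 u)).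
    { intro u. unfold keep.
      destruct (excluded_middle_informative (u = v0 \/ E v0 u)); split; intro; easy. }
    destruct (IH (length (filter keep (a :: L0)))) with (L := filter keep (a :: L0))
      as [I [HIL [HIind HIdom]]]; [| reflexivity |].
    { subst N. apply (filter_length_lt keep _ v0 Hv0).
      destruct (keep v0) eqn:Hk; [| reflexivity]. apply Hkeep in Hk. tauto. }
    exists (fun u => u = v0 \/ I u). split; [| split].
    + intros u [-> | Hu]; [exact Hv0 |]. apply HIL, filter_In in Hu. tauto.
    + intros u v [-> | Hu] [-> | Hv]; [apply Hirr | | | apply HIind; assumption].
      * apply HIL, filter_In in Hv. rewrite Hkeep in Hv. tauto.
      * apply HIL, filter_In in Hu. rewrite Hkeep in Hu. intro Huv. apply Hsym in Huv. tauto.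
    + intros v Hv HnI.
      destruct (classic (v = v0 \/ E v0 v)) as [[-> | Hadj] | Hfar].
      * exfalso. apply HnI. now left.
      * exists v0. split; [now left |]. split; [exact (Hsym _ _ Hadj) | exact (Hmax v Hv)].
      * destruct (HIdom v) as [u [Hu Hvu]].
        -- apply filter_In. split; [exact Hv |]. apply Hkeep. exact Hfar.
        -- intro; apply HnI; now right.
        -- exists u. split; [now right | exact Hvu].
Qed.

Lemma adj_sym F u v : adj F u v -> adj F v u.
Proof. intros [Hne [p [Hu Hv]]]. split; [congruence |]. exists p. auto. Qed.

Lemma adj_irrefl F u : ~ adj F u u.
Proof. intros [Hne _]. auto. Qed.

Lemma heavy_maximal_independent_set n F (w : nat -> R) :
  exists I : nat -> Prop, (forall u, I u -> (u < n)%nat) /\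
    (forall u v, I u -> I v -> ~ adj F u v) /\
    (forall v, (v < n)%nat -> ~ I v -> exists u, I u /\ adj F v u /\ w v <= w u).
Proof.
  destruct (greedy_independent_set (adj F) w (adj_sym F) (adj_irrefl F) (seq 0 n))
    as [I [HIn [HIind HIdom]]].
  exists I. split; [| split; [exact HIind |]].
  - intros u Hu. apply HIn, in_seq in Hu. lia.
  - intros v Hv. apply HIdom, in_seq. lia.
Qed.

Lemma nat_argmin {A : Type} (P : A -> Prop) (f : A -> nat) :
  (exists a, P a) -> exists a, P a /\ forall b, P b -> (f a <= f b)%nat.
Proof.
  intros [a Ha]. remember (f a) as t eqn:Ht. revert a Ha Ht.
  induction t as [t IH] using (well_founded_induction lt_wf). intros a Ha Ht.
  destruct (classic (exists b, P b /\ (f b < f a)%nat)) as [[b [Hb Hlt]] | Hnone].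
  - apply (IH (f b)) with b; [lia | exact Hb | reflexivity].
  - exists a. split; [exact Ha |]. intros b Hb.
    apply Nat.nlt_ge. intro Hlt. apply Hnone. eauto.
Qed.

Lemma mul_add_eq_quotient a b c d Q :
  (b < Q)%nat -> (d < Q)%nat -> (a * Q + b = c * Q + d)%nat -> a = c.
Proof. intros Hb Hd E. destruct (Nat.lt_total a c) as [H | [H | H]]; nia. Qed.

Lemma pointed_cf_of_dominating_set n F (Rep : nat -> Prop) (pal : nat -> nat) :
  (forall v, (v < n)%nat -> (exists u, (u < n)%nat /\ adj F v u) ->
     exists u, (u < n)%nat /\ adj F v u /\ Rep u) ->
  (forall v u w, (v < n)%nat -> Rep u -> Rep w -> u <> w ->
     adj F v u -> adj F v w -> pal u <> pal w) ->
  pointed_cf n F (fun w => if excluded_middle_informative (Rep w) then S (pal w) else 0%nat).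
Proof.
  intros Hdom Hpal v Hv Hnb.
  destruct (Hdom v Hv Hnb) as [u [Hu [Hvu HRu]]].
  exists u. split; [exact Hu |]. split; [exact Hvu |].
  intros w _ Hvw Hwu.
  destruct (excluded_middle_informative (Rep u)) as [_ | Hn]; [| contradiction].
  destruct (excluded_middle_informative (Rep w)) as [HRw | _]; [| discriminate].
  intro E. injection E. apply (Hpal v w u); auto.
Qed.

(* A vertex outside [I] is served by its [I]-neighbour of least scale index, i.e. largest
   radius class. *)
Lemma closed_cf_of_scaled_independent_set n F (I : nat -> Prop) (sc pal : nat -> nat) (T Q : nat) :
  (forall u, I u -> (u < n)%nat /\ (sc u <= T)%nat /\ (pal u < Q)%nat) ->
  (forall u w, I u -> I w -> ~ adj F u w) ->
  (forall v, (v < n)%nat -> ~ I v -> exists u, I u /\ adj F v u) ->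
  (forall v u w, (v < n)%nat -> I u -> I w -> u <> w -> adj F v u -> adj F v w ->
     (forall u', I u' -> adj F v u' -> (sc u <= sc u')%nat) -> sc w = sc u ->
     pal u <> pal w) ->
  closed_cf n F (fun w => if excluded_middle_informative (I w)
                          then (sc w * Q + pal w)%nat else (S T * Q)%nat).
Proof.
  intros HI Hindep Hdom Hpal v Hv.
  assert (Hlow : forall u, I u -> (sc u * Q + pal u < S T * Q)%nat).
  { intros u Hu. destruct (HI u Hu) as [_ [? ?]]. nia. }
  destruct (classic (I v)) as [HIv | HIv].
  - exists v. split; [exact Hv |]. split; [now left |].
    intros w _ [-> | Hvw] Hne; [congruence |].
    destruct (excluded_middle_informative (I w)) as [HIw | _].
    { exfalso. exact (Hindep v w HIv HIw Hvw). }
    destruct (excluded_middle_informative (I v)) as [_ | ]; [| contradiction].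
    specialize (Hlow v HIv). lia.
  - destruct (nat_argmin (fun u => I u /\ adj F v u) sc (Hdom v Hv HIv))
      as [u [[HIu Hvu] Hmin]].
    exists u. split; [apply HI; exact HIu |]. split; [now right |].
    intros w _ Hvw Hwu.
    destruct (excluded_middle_informative (I u)) as [_ |]; [| contradiction].
    specialize (Hlow u HIu).
    destruct (excluded_middle_informative (I w)) as [HIw | _]; [| lia].
    destruct Hvw as [-> | Hvw]; [contradiction |].
    intro E. destruct (HI u HIu) as [_ [_ Hpu]]. destruct (HI w HIw) as [_ [_ Hpw]].
    assert (Hsc : sc w = sc u) by exact (mul_add_eq_quotient _ _ _ _ Q Hpw Hpu E).
    apply (Hpal v u w Hv HIu HIw (not_eq_sym Hwu) Hvu Hvw).
    + intros u' Hu' Hvu'. apply Hmin. auto.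
    + exact Hsc.
    + rewrite Hsc in E. lia.
Qed.

Lemma ln2_gt_half : 1 / 2 < ln 2.
Proof.
  assert (Hsq : exp (1 / 2) * exp (1 / 2) = exp 1) by (rewrite <- exp_plus; f_equal; lra).
  pose proof exp_le_3. pose proof (exp_pos (1 / 2)).
  rewrite <- (ln_exp (1 / 2)). apply ln_increasing; [exact (exp_pos _) | nra].
Qed.

Definition log2_ceil (k : R) : nat := Z.to_nat (up (ln k / ln 2)).

Lemma log2_ceil_spec k : 2 <= k -> k <= 2 ^ log2_ceil k /\ INR (log2_ceil k) <= 2 * ln k + 1.
Proof.
  intro Hk. pose proof ln2_gt_half.
  assert (Hlnk : 0 < ln k) by (rewrite <- ln_1; apply ln_increasing; lra).
  assert (Hq : ln k / ln 2 * ln 2 = ln k) by (field; lra).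
  assert (Hq2 : ln k / ln 2 <= 2 * ln k).
  { apply (Rmult_le_reg_r (ln 2)); [lra |]. rewrite Hq. nra. }
  destruct (archimed (ln k / ln 2)) as [Hup1 Hup2].
  assert (HT : INR (log2_ceil k) = IZR (up (ln k / ln 2))).
  { unfold log2_ceil. rewrite INR_IZR_INZ, Z2Nat.id; [reflexivity |].
    apply le_IZR. apply Rmult_le_reg_r with (ln 2); [lra |]. rewrite Rmult_0_l. nra. }
  split; [| lra].
  apply Rnot_lt_le. intro Hlt.
  apply ln_increasing in Hlt; [| apply pow_lt; lra].
  rewrite ln_pow, HT in Hlt by lra. nra.
Qed.

Lemma pointed_colour_count_bound rho k : 1 <= rho -> 1 <= k ->
  INR (grid_count (24 * (rho * k)) + 2) <= 1000000 * k ^ 2 * rho ^ 2.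
Proof.
  intros Hrho Hk. assert (Hrk : 1 <= rho * k) by nra.
  pose proof (grid_count_bound (24 * (rho * k)) ltac:(lra)).
  replace (1000000 * k ^ 2 * rho ^ 2) with (1000000 * (rho * k) ^ 2) by ring.
  rewrite plus_INR. simpl (INR 2). nra.
Qed.

Lemma closed_colour_count_bound rho k : 1 <= rho -> 2 <= k ->
  INR (S (log2_ceil k) * S (grid_count (16 * rho)) + 1) <= 1000000 * rho ^ 2 * ln k.
Proof.
  intros Hrho Hk.
  set (T := log2_ceil k). set (D := grid_count (16 * rho)).
  destruct (log2_ceil_spec k Hk) as [_ HT]. fold T in HT.
  pose proof (grid_count_bound (16 * rho) ltac:(lra)) as HD. fold D in HD.
  pose proof ln2_gt_half.
  assert (Hlnk : ln 2 <= ln k)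
    by (destruct (Req_dec k 2) as [-> | ]; [lra | left; apply ln_increasing; lra]).
  rewrite plus_INR, mult_INR, (S_INR T), (S_INR D). simpl (INR 1).
  pose proof (pos_INR T). pose proof (pos_INR D).
  assert (HD' : INR D + 1 <= 2451 * rho ^ 2) by nra.
  assert ((INR T + 1) * (INR D + 1) <= (2 * ln k + 2) * (2451 * rho ^ 2))
    by (apply Rmult_le_compat; lra).
  assert (1 <= rho ^ 2) by nra.
  assert (rho ^ 2 * 2 <= rho ^ 2 * (4 * ln k)) by (apply Rmult_le_compat_l; lra).
  assert (1 <= rho ^ 2 * (2 * ln k)) by nra.
  lra.
Qed.

Lemma exists_scale_between (L : nat -> R) (s : R) (T : nat) :
  s <= L 0%nat -> L (S T) < s -> exists t, (t <= T)%nat /\ L (S t) < s <= L t.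
Proof.
  intro H0. induction T as [| T IH]; intro HT.
  - exists 0%nat. split; [lia | lra].
  - destruct (Rlt_le_dec (L (S T)) s) as [Hlt | Hle].
    + destruct (IH Hlt) as [t [Ht Hs]]. exists t. split; [lia | exact Hs].
    + exists (S T). split; [lia | lra].
Qed.

Section NormalisedFamily.

Variables (rho k m : R) (n : nat) (F : nat -> pt -> Prop) (x : nat -> pt) (r : nat -> R).
Hypothesis rho_ge1 : 1 <= rho.
Hypothesis m_pos : 0 < m.
Hypothesis family : normalised_family rho k m n F x r.

Lemma adj_centres_close i j : (i < n)%nat -> (j < n)%nat -> adj F i j ->
  sup_dist (x i) (x j) <= rho * (r i + r j).
Proof.
  intros Hi Hj [_ [p [Hpi Hpj]]].
  destruct (family i Hi) as [_ [_ Hout_i]]. destruct (family j Hj) as [_ [_ Hout_j]].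
  apply Hout_i in Hpi. apply Hout_j in Hpj. unfold disc in Hpi, Hpj.
  rewrite dist2_sym in Hpj.
  pose proof (sup_dist_triangle (x i) p (x j)).
  pose proof (sup_dist_le_dist2 (x i) p). pose proof (sup_dist_le_dist2 p (x j)).
  lra.
Qed.

Lemma nonadj_centres_apart u w : (u < n)%nat -> (w < n)%nat -> u <> w -> ~ adj F u w ->
  r u / 2 < sup_dist (x u) (x w).
Proof.
  intros Hu Hw Hne Hna. apply Rnot_le_lt. intro Hclose. apply Hna.
  destruct (family u Hu) as [_ [Hin_u _]]. destruct (family w Hw) as [[Hrw _] [Hin_w _]].
  split; [exact Hne |]. exists (x w). split.
  - apply Hin_u. unfold disc. pose proof (dist2_le_sup_dist (x u) (x w)). lra.
  - apply Hin_w. unfold disc. rewrite dist2_diag. lra.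
Qed.

Section Pointed.

Hypothesis k_ge1 : 1 <= k.

Lemma adj_centres_close_uniform i j : (i < n)%nat -> (j < n)%nat -> adj F i j ->
  sup_dist (x i) (x j) <= 2 * rho * k * m.
Proof.
  intros Hi Hj Hij. pose proof (adj_centres_close i j Hi Hj Hij).
  destruct (family i Hi) as [[_ Hri] _]. destruct (family j Hj) as [[_ Hrj] _].
  assert (rho * (r i + r j) <= rho * (2 * k * m)) by (apply Rmult_le_compat_l; lra).
  lra.
Qed.

Section Representatives.

Variables (I Rep : nat -> Prop) (anchor : nat -> nat).
Hypothesis I_indep : forall u w, I u -> I w -> ~ adj F u w.
Hypothesis anchor_spec : forall w, Rep w ->
  (w < n)%nat /\ (anchor w < n)%nat /\ I (anchor w) /\
  sup_dist (x w) (x (anchor w)) <= 2 * rho * k * m.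
Hypothesis anchor_inj : forall w1 w2, Rep w1 -> Rep w2 ->
  (I w1 <-> I w2) -> anchor w1 = anchor w2 -> w1 = w2.

(* The anchors of the representatives sharing a neighbour with [u] lie within
   [6 rho k m] of [x u], and, being independent, they are [m / 4]-separated. *)
Lemma representative_conflict_degree u l : (u < n)%nat -> NoDup l ->
  (forall w, In w l -> Rep w /\ exists v, (v < n)%nat /\ adj F v u /\ adj F v w) ->
  (length l <= grid_count (24 * (rho * k)))%nat.
Proof.
  intros Hu Hl Hin.
  replace (24 * (rho * k)) with (6 * rho * k * m / (m / 4)) by (field; lra).
  apply (packing_bound l (fun w => x (anchor w))
           (fun w => if excluded_middle_informative (I w) then true else false)
           (m / 4) (6 * rho * k * m) (x u)); [lra | exact Hl | |].
  - intros w Hw. destruct (Hin w Hw) as [HRw [v [Hv [Hvu Hvw]]]].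
    destruct (anchor_spec w HRw) as [Hwn [_ [_ Hanc]]].
    pose proof (adj_centres_close_uniform v u Hv Hu Hvu).
    pose proof (adj_centres_close_uniform v w Hv Hwn Hvw) as Hwv.
    rewrite sup_dist_sym in Hanc, Hwv.
    pose proof (sup_dist_triangle (x (anchor w)) (x w) (x u)).
    pose proof (sup_dist_triangle (x w) (x v) (x u)).
    lra.
  - intros w1 w2 Hw1 Hw2 Hcls Hclose.
    destruct (Hin w1 Hw1) as [HR1 _]. destruct (Hin w2 Hw2) as [HR2 _].
    destruct (anchor_spec w1 HR1) as [_ [Ha1 [HIa1 _]]].
    destruct (anchor_spec w2 HR2) as [_ [Ha2 [HIa2 _]]].
    apply anchor_inj; [exact HR1 | exact HR2 | |].
    + destruct (excluded_middle_informative (I w1)), (excluded_middle_informative (I w2));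
        [tauto | discriminate | discriminate | tauto].
    + destruct (Nat.eq_dec (anchor w1) (anchor w2)) as [E | Hne]; [exact E | exfalso].
      pose proof (nonadj_centres_apart _ _ Ha1 Ha2 Hne (I_indep _ _ HIa1 HIa2)).
      destruct (family _ Ha1) as [[Hlo _] _]. lra.
Qed.

End Representatives.

(* A maximal independent set [I] together with one chosen neighbour [p v] of each
   non-isolated [v] in [I]; such a [p v] is anchored at [v]. *)
Definition representatives (I : nat -> Prop) (p : nat -> nat) (w : nat) : Prop :=
  I w \/ exists v, I v /\ (exists u, (u < n)%nat /\ adj F v u) /\ p v = w.

Lemma representatives_anchored (I : nat -> Prop) (p : nat -> nat) :
  (forall u w, I u -> I w -> ~ adj F u w) ->
  (forall v, I v /\ (exists u, (u < n)%nat /\ adj F v u) -> adj F v (p v)) ->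
  exists anchor : nat -> nat, forall w, representatives I p w ->
    I (anchor w) /\ (I w -> anchor w = w) /\ (~ I w -> adj F (anchor w) w /\ p (anchor w) = w).
Proof.
  intros HIind Hp.
  apply (guarded_choice 0%nat (representatives I p)
           (fun w a => I a /\ (I w -> a = w) /\ (~ I w -> adj F a w /\ p a = w))).
  intros w [HIw | [v [HIv [Hnb Hpv]]]].
  - exists w. split; [exact HIw |]. split; [reflexivity | contradiction].
  - pose proof (Hp v (conj HIv Hnb)) as Hvw. rewrite Hpv in Hvw.
    exists v. split; [exact HIv |]. split.
    + intro HIw. exfalso. exact (HIind v w HIv HIw Hvw).
    + intros _. split; [exact Hvw | exact Hpv].
Qed.

Lemma pointed_sparse_representatives :
  exists Rep : nat -> Prop, (forall w, Rep w -> (w < n)%nat) /\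
    (forall v, (v < n)%nat -> (exists u, (u < n)%nat /\ adj F v u) ->
       exists u, (u < n)%nat /\ adj F v u /\ Rep u) /\
    (forall u l, (u < n)%nat -> NoDup l ->
       (forall w, In w l -> Rep w /\ exists v, (v < n)%nat /\ adj F v u /\ adj F v w) ->
       (length l <= grid_count (24 * (rho * k)))%nat).
Proof.
  destruct (heavy_maximal_independent_set n F r) as [I [HIn [HIind HIdom]]].
  destruct (guarded_choice 0%nat (fun v => I v /\ exists u, (u < n)%nat /\ adj F v u)
              (fun v u => (u < n)%nat /\ adj F v u)) as [p Hp].
  { intros v [_ Hnb]. exact Hnb. }
  destruct (representatives_anchored I p HIind (fun v Hv => proj2 (Hp v Hv)))
    as [anchor Hanchor].
  assert (HRn : forall w, representatives I p w -> (w < n)%nat).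
  { intros w [HIw | [v [HIv [Hnb <-]]]]; [exact (HIn w HIw) | exact (proj1 (Hp v (conj HIv Hnb)))]. }
  exists (representatives I p). split; [exact HRn | split].
  - intros v Hv Hnb. destruct (classic (I v)) as [HIv | HIv].
    + destruct (Hp v (conj HIv Hnb)) as [Hpv Hvp].
      exists (p v). split; [exact Hpv |]. split; [exact Hvp |]. right. exists v. auto.
    + destruct (HIdom v Hv HIv) as [u [HIu [Hvu _]]].
      exists u. split; [exact (HIn u HIu) |]. split; [exact Hvu | now left].
  - intros u l Hu Hl Hin.
    apply (representative_conflict_degree I (representatives I p) anchor HIind) with (u := u);
      [| | exact Hu | exact Hl | exact Hin].
    + intros w HRw. destruct (Hanchor w HRw) as [HIa [Hself Hother]].
      split; [exact (HRn w HRw) |]. split; [exact (HIn _ HIa) |]. split; [exact HIa |].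
      destruct (classic (I w)) as [HIw | HIw].
      * rewrite (Hself HIw), sup_dist_diag.
        assert (0 <= rho * k) by nra. assert (0 <= rho * k * m) by nra. lra.
      * destruct (Hother HIw) as [Haw _]. rewrite sup_dist_sym.
        apply adj_centres_close_uniform; [exact (HIn _ HIa) | exact (HRn w HRw) | exact Haw].
    + intros w1 w2 HR1 HR2 Hiff Ea.
      destruct (Hanchor w1 HR1) as [_ [Hself1 Hother1]].
      destruct (Hanchor w2 HR2) as [_ [Hself2 Hother2]].
      destruct (classic (I w1)) as [HI1 | HI1].
      * rewrite <- (Hself1 HI1), <- (Hself2 (proj1 Hiff HI1)). exact Ea.
      * destruct (Hother1 HI1) as [_ E1].
        destruct (Hother2 (fun H => HI1 (proj2 Hiff H))) as [_ E2].
        rewrite <- E1, <- E2, Ea. reflexivity.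
Qed.

Lemma normalised_chi_pn : chi_pn_le n F (1000000 * k ^ 2 * rho ^ 2).
Proof.
  destruct pointed_sparse_representatives as [Rep [HRn [Hdom Hdeg]]].
  set (D := grid_count (24 * (rho * k))).
  set (conflict := fun u w => u <> w /\ Rep u /\ Rep w /\
                              exists v, (v < n)%nat /\ adj F v u /\ adj F v w).
  destruct (greedy_colouring conflict D n) as [pal [Hpal Hproper]].
  - intros u w [Hne [Hu [Hw [v [Hv [Hvu Hvw]]]]]].
    split; [congruence |]. split; [exact Hw |]. split; [exact Hu |]. exists v. auto.
  - intros u [Hne _]. auto.
  - intros u Hu l Hl Hin. apply (Hdeg u l Hu Hl).
    intros w Hw. destruct (Hin w Hw) as [_ [_ [_ [HRw Hv]]]]. auto.
  - exists (D + 2)%nat,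
      (fun w => if excluded_middle_informative (Rep w) then S (pal w) else 0%nat).
    split; [| split].
    + exact (pointed_colour_count_bound rho k rho_ge1 k_ge1).
    + intros i _. destruct (excluded_middle_informative (Rep i)); specialize (Hpal i); lia.
    + apply pointed_cf_of_dominating_set; [exact Hdom |].
      intros v u w Hv HRu HRw Hne Hvu Hvw.
      apply Hproper; [exact (HRn u HRu) | exact (HRn w HRw) |].
      repeat split; auto. exists v. auto.
Qed.

End Pointed.

Section Closed.

Hypothesis k_ge2 : 2 <= k.

Definition scale_len (t : nat) : R := k * m / 2 ^ t.

Lemma scale_len_pos t : 0 < scale_len t.
Proof. unfold scale_len. apply Rdiv_lt_0_compat; [nra | apply pow_lt; lra]. Qed.

Lemma scale_len_S t : scale_len (S t) = scale_len t / 2.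
Proof. unfold scale_len. simpl. field. apply pow_nonzero. lra. Qed.

Lemma scale_len_antitone t1 t2 : (t1 <= t2)%nat -> scale_len t2 <= scale_len t1.
Proof.
  intro Ht. unfold scale_len. apply Rmult_le_compat_l; [nra |].
  apply Rinv_le_contravar; [apply pow_lt; lra | apply Rle_pow; [lra | exact Ht]].
Qed.

Lemma scale_index_exists : exists sc : nat -> nat, forall i, (i < n)%nat ->
  (sc i <= log2_ceil k)%nat /\ scale_len (S (sc i)) < r i <= scale_len (sc i).
Proof.
  destruct (log2_ceil_spec k k_ge2) as [Hpow _].
  set (T := log2_ceil k) in *.
  apply (guarded_choice 0%nat (fun i => (i < n)%nat)
           (fun i t => (t <= T)%nat /\ scale_len (S t) < r i <= scale_len t)).
  intros i Hi.
  destruct (family i Hi) as [[Hlo Hhi] _].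
  apply exists_scale_between.
  - unfold scale_len. simpl. lra.
  - assert (HT : 0 < 2 ^ T) by (apply pow_lt; lra).
    assert (k / 2 ^ T <= 1).
    { apply (Rmult_le_reg_r (2 ^ T)); [exact HT |]. field_simplify; lra. }
    unfold scale_len. simpl.
    replace (k * m / (2 * 2 ^ T)) with (k / 2 ^ T * (m / 2)) by (field; lra).
    assert (0 <= k / 2 ^ T) by (apply Rlt_le, Rdiv_lt_0_compat; lra).
    nra.
Qed.

Section ScaledIndependentSet.

Variables (I : nat -> Prop) (sc : nat -> nat).
Hypothesis I_below : forall u, I u -> (u < n)%nat.
Hypothesis I_indep : forall u w, I u -> I w -> ~ adj F u w.
Hypothesis I_heavy : forall v, (v < n)%nat -> ~ I v -> exists u, I u /\ adj F v u /\ r v <= r u.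
Hypothesis sc_spec : forall i, (i < n)%nat -> scale_len (S (sc i)) < r i <= scale_len (sc i).

Lemma same_scale_conflict_degree u l : (u < n)%nat -> NoDup l ->
  (forall w, In w l -> (w < n)%nat /\ I w /\ sc w = sc u /\
     sup_dist (x u) (x w) <= 4 * rho * scale_len (sc u)) ->
  (length l <= grid_count (16 * rho))%nat.
Proof.
  intros Hu Hl Hin. set (L := scale_len (sc u)).
  assert (HL : 0 < L) by apply scale_len_pos.
  replace (16 * rho) with (4 * rho * L / (L / 4)) by (field; lra).
  apply (packing_bound l x (fun _ => true) (L / 4) (4 * rho * L) (x u)); [lra | exact Hl | |].
  - intros w Hw. rewrite sup_dist_sym. apply Hin, Hw.
  - intros w1 w2 Hw1 Hw2 _ Hclose.
    destruct (Hin w1 Hw1) as [Hn1 [HI1 [Hs1 _]]]. destruct (Hin w2 Hw2) as [Hn2 [HI2 _]].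
    destruct (Nat.eq_dec w1 w2) as [E | Hne]; [exact E | exfalso].
    pose proof (nonadj_centres_apart w1 w2 Hn1 Hn2 Hne (I_indep w1 w2 HI1 HI2)).
    destruct (sc_spec w1 Hn1) as [Hlo _]. rewrite Hs1, scale_len_S in Hlo. fold L in Hlo.
    lra.
Qed.

(* [v] is no larger than some [I]-neighbour [u0], and [u0] is in a scale class no larger than
   that of [u]; so all of [r u], [r v], [r w] are at most [scale_len (sc u)]. *)
Lemma least_scale_neighbours_close v u w : (v < n)%nat -> I u -> I w ->
  adj F v u -> adj F v w -> (forall u', I u' -> adj F v u' -> (sc u <= sc u')%nat) ->
  sc w = sc u -> sup_dist (x u) (x w) <= 4 * rho * scale_len (sc u).
Proof.
  intros Hv HIu HIw Hvu Hvw Hmin Hsw.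
  assert (HIv : ~ I v) by (intro HIv; exact (I_indep v u HIv HIu Hvu)).
  destruct (I_heavy v Hv HIv) as [u0 [HIu0 [Hvu0 Hrv]]].
  pose proof (scale_len_antitone _ _ (Hmin u0 HIu0 Hvu0)).
  destruct (sc_spec u0 (I_below u0 HIu0)) as [_ Hr0].
  destruct (sc_spec u (I_below u HIu)) as [_ Hru].
  destruct (sc_spec w (I_below w HIw)) as [_ Hrw]. rewrite Hsw in Hrw.
  pose proof (adj_centres_close v u Hv (I_below u HIu) Hvu) as Hdu.
  pose proof (adj_centres_close v w Hv (I_below w HIw) Hvw) as Hdw.
  rewrite sup_dist_sym in Hdu.
  pose proof (sup_dist_triangle (x u) (x v) (x w)).
  assert (rho * (r v + r u) + rho * (r v + r w) <= rho * (4 * scale_len (sc u)))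
    by (rewrite <- Rmult_plus_distr_l; apply Rmult_le_compat_l; lra).
  lra.
Qed.

End ScaledIndependentSet.

Lemma normalised_chi_cn : chi_cn_le n F (1000000 * rho ^ 2 * ln k).
Proof.
  destruct scale_index_exists as [sc Hsc].
  destruct (heavy_maximal_independent_set n F r) as [I [HIn [HIind HIdom]]].
  set (T := log2_ceil k). set (D := grid_count (16 * rho)).
  set (conflict := fun u w => u <> w /\ I u /\ I w /\ sc u = sc w /\
                              sup_dist (x u) (x w) <= 4 * rho * scale_len (sc u)).
  destruct (greedy_colouring conflict D n) as [pal [Hpal Hproper]].
  - intros u w [Hne [Hu [Hw [Hs Hd]]]].
    repeat split; auto. rewrite sup_dist_sym, <- Hs. exact Hd.
  - intros u [Hne _]. auto.
  - intros u Hu l Hl Hin.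
    apply (same_scale_conflict_degree I sc HIind) with (u := u); [| exact Hu | exact Hl |].
    + intros i Hi. apply Hsc, Hi.
    + intros w Hw. destruct (Hin w Hw) as [Hwn [_ [_ [HIw [Hs Hd]]]]]. auto.
  - exists (S T * S D + 1)%nat,
      (fun w => if excluded_middle_informative (I w) then (sc w * S D + pal w)%nat
                else (S T * S D)%nat).
    split; [| split].
    + exact (closed_colour_count_bound rho k rho_ge1 k_ge2).
    + intros i _. destruct (excluded_middle_informative (I i)) as [HIi |]; [| lia].
      destruct (Hsc i (HIn i HIi)) as [HscT _]. specialize (Hpal i). fold T in HscT. nia.
    + apply closed_cf_of_scaled_independent_set; [| exact HIind | |].
      * intros u HIu. split; [exact (HIn u HIu) |]. split; [apply Hsc, HIn, HIu |].
        specialize (Hpal u). lia.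
      * intros v Hv HIv. destruct (HIdom v Hv HIv) as [u [HIu [Hvu _]]]. eauto.
      * intros v u w Hv HIu HIw Hne Hvu Hvw Hmin Hsw.
        apply Hproper; [exact (HIn u HIu) | exact (HIn w HIw) |].
        repeat split; auto.
        apply (least_scale_neighbours_close I sc HIn HIind HIdom) with (v := v); auto.
        intros i Hi. apply Hsc, Hi.
Qed.

End Closed.

End NormalisedFamily.

Theorem proposition1p7 :
  exists K : R, 0 < K /\
    forall (rho k : R) (n : nat) (F : nat -> pt -> Prop),
      1 <= rho -> 1 <= k ->
      (forall i j, (i < n)%nat -> (j < n)%nat -> i <> j -> F i <> F j) ->
      (forall i, (i < n)%nat -> fat rho (F i)) ->
      (forall i j s1 s2, (i < n)%nat -> (j < n)%nat ->
         is_size rho (F i) s1 -> is_size rho (F j) s2 -> s1 <= k * s2) ->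
      chi_pn_le n F (K * k ^ 2 * rho ^ 2) /\
      (2 <= k -> chi_cn_le n F (K * rho ^ 2 * ln k)).
Proof.
  exists 1000000. split; [lra |].
  intros rho k n F Hrho Hk _ Hfat Hsize.
  destruct (fat_family_normalisation rho k n F Hfat Hsize) as [x [r [m [Hm Hfamily]]]].
  split.
  - exact (normalised_chi_pn rho k m n F x r Hrho Hm Hfamily Hk).
  - intro Hk2. exact (normalised_chi_cn rho k m n F x r Hrho Hm Hfamily Hk2).
Qed.
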